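(* Let $\langle D,E,e,\varepsilon\rangle$ be a restricted Priestley duality between a variety $\mathcal A$ and a category $\mathcal X$. (1) For $\mathbb X_1,\mathbb X_2\in\mathcal X$, the underlying Priestley space of their coproduct in $\mathcal X$ is isomorphic to the disjoint union of their underlying Priestley spaces: $(\mathbb X_1\sqcup\mathbb X_2)^\flat\cong\mathbb X_1^\flat\,\dot\cup\,\mathbb X_2^\flat$ via the natural map from $\mathbb X_1^\flat\,\dot\cup\,\mathbb X_2^\flat$ to $(\mathbb X_1\sqcup\mathbb X_2)^\flat$. (2) Let $\phi_1\colon\mathbb X_1\to\mathbb Y$ and $\phi_2\colon\mathbb X_2\to\mathbb Y$ be $\mathcal X$-morphisms. If $\phi_1$ and $\phi_2$ are $\mathcal P$-embeddings and $\mathbb Y^\flat=\phi_1^\flat(\mathbb X_1^\flat)\,\dot\cup\,\phi_2^\flat(\mathbb X_2^\flat)$, then $\mathbb Y$ with the morphisms $\phi_1,\phi_2$ is a coproduct of $\mathbb X_1$ and $\mathbb X_2$ in $\mathcal X$.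
   Context: $\mathcal D$: bounded distributive lattices; $\mathcal P$: Priestley spaces. Priestley duality: $H(\mathbf L)=\mathcal D(\mathbf L,\mathbf 2)$, $K(\mathbb X)=\mathcal P(\mathbb X,\mathbbm 2)$, morphisms by precomposition, unit and counit by evaluation. A restricted Priestley duality $\langle D,E,e,\varepsilon\rangle$: $\mathcal A$ a variety with a term reduct in $\mathcal D$ and forgetful functor ${}^\flat\colon\mathcal A\to\mathcal D$; $\mathcal X$ a category with functor ${}^\flat\colon\mathcal X\to\mathcal P$; $D,E$ a dual equivalence with unit $e$ and counit $\varepsilon$ such that ${}^\flat\circ D=H\circ{}^\flat$, ${}^\flat\circ E=K\circ{}^\flat$, $e_{\mathbf A}^\flat=e_{\mathbf A^\flat}$, $\varepsilon_{\mathbb X}^\flat=\varepsilon_{\mathbb X^\flat}$. A morphism $\phi$ of $\mathcal X$ is a $\mathcal P$-embedding if $\phi^\flat$ is an embedding of Priestley spaces. The disjoint union $\dot\cup$ of Priestley spaces is the disjoint union of the sets with the disjoint-union order (no comparabilities between the two parts) and sum topology; $\mathbb Y^\flat=\phi_1^\flat(\mathbb X_1^\flat)\,\dot\cup\,\phi_2^\flat(\mathbb X_2^\flat)$ means the two images are disjoint, cover $\mathbb Y^\flat$, and no element of one is comparable to one of the other. *)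

From Stdlib Require Import List FunctionalExtensionality PropExtensionality.



Record Signature := { sop : Type; sar : sop -> nat }.

Inductive term (Sg : Signature) (V : Type) : Type :=
| tvar : V -> term Sg V
| tapp : forall o : sop Sg, ({i : nat | i < @sar Sg o} -> term Sg V) -> term Sg V.
Arguments tvar {Sg V} _.
Arguments tapp {Sg V} o _.

Record Alg (Sg : Signature) := {
  acar :> Type;
  aop : forall o : sop Sg, ({i : nat | i < @sar Sg o} -> acar) -> acar }.
Arguments acar {Sg} _.
Arguments aop {Sg} _ _ _.

Fixpoint teval (Sg : Signature) (A : Alg Sg) (V : Type) (v : V -> acar A)
  (t : term Sg V) : acar A :=
  match t with
  | tvar x => v x
  | tapp o args => aop A o (fun i => teval Sg A V v (args i))
  end.
Arguments teval {Sg} A {V} v t.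

(* A variety: the class of algebras of a signature satisfying a set of
   identities (in countably many variables). *)
Record Variety := {
  vsig : Signature;
  veq : term vsig nat -> term vsig nat -> Prop }.

Definition models (K : Variety) (A : Alg (vsig K)) : Prop :=
  forall l r, veq K l r -> forall v : nat -> acar A, teval A v l = teval A v r.

Definition vobj (K : Variety) := { A : Alg (vsig K) | models K A }.


Definition is_alg_hom (Sg : Signature) (A B : Alg Sg) (f : acar A -> acar B) :=
  forall (o : sop Sg) (args : {i : nat | i < @sar Sg o} -> acar A),
    f (aop A o args) = aop B o (fun i => f (args i)).
Arguments is_alg_hom {Sg A B} f.

Record AHom (Sg : Signature) (A B : Alg Sg) := {
  ahfun :> acar A -> acar B;
  ahom : is_alg_hom ahfun }.
Arguments AHom {Sg} A B.
Arguments ahfun {Sg A B} _ _.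
Arguments ahom {Sg A B} _ _ _.
Arguments Build_AHom {Sg A B} _ _.

Definition homA (K : Variety) (A B : vobj K) := AHom (proj1_sig A) (proj1_sig B).
Arguments homA {K} A B.

Definition aid (K : Variety) (A : vobj K) : homA A A :=
  @Build_AHom _ (proj1_sig A) (proj1_sig A) (fun x => x) (fun o args => eq_refl).
Arguments aid {K} A.

Lemma alg_hom_comp (Sg : Signature) (A B C : Alg Sg) (g : AHom B C) (f : AHom A B) :
  is_alg_hom (fun x => g (f x)).
Proof. intros o args. rewrite (ahom f), (ahom g). reflexivity. Qed.

Definition acomp (K : Variety) (A B C : vobj K) (g : homA B C) (f : homA A B)
  : homA A C := Build_AHom _ (alg_hom_comp _ _ _ _ g f).
Arguments acomp {K A B C} g f.

Record PreBDL := {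
  bcar :> Type;
  bmeet : bcar -> bcar -> bcar;
  bjoin : bcar -> bcar -> bcar;
  bbot : bcar;
  btop : bcar }.

Definition is_bdl (L : PreBDL) : Prop :=
  (forall x y z, bmeet L x (bmeet L y z) = bmeet L (bmeet L x y) z) /\
  (forall x y z, bjoin L x (bjoin L y z) = bjoin L (bjoin L x y) z) /\
  (forall x y, bmeet L x y = bmeet L y x) /\
  (forall x y, bjoin L x y = bjoin L y x) /\
  (forall x y, bmeet L x (bjoin L x y) = x) /\
  (forall x y, bjoin L x (bmeet L x y) = x) /\
  (forall x y z, bmeet L x (bjoin L y z) = bjoin L (bmeet L x y) (bmeet L x z)) /\
  (forall x, bjoin L x (bbot L) = x) /\
  (forall x, bmeet L x (btop L) = x).

Definition bdl_hom (L M : PreBDL) (f : bcar L -> bcar M) : Prop :=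
  (forall x y, f (bmeet L x y) = bmeet M (f x) (f y)) /\
  (forall x y, f (bjoin L x y) = bjoin M (f x) (f y)) /\
  f (bbot L) = bbot M /\ f (btop L) = btop M.
Arguments bdl_hom {L M} f.

Record BHom (L M : PreBDL) := { bhfun :> bcar L -> bcar M; bhom : bdl_hom bhfun }.
Arguments bhfun {L M} _ _.
Arguments bhom {L M} _.

Definition two : PreBDL := @Build_PreBDL bool andb orb false true.

(* A variety with a term reduct in D: binary terms for meet/join (variable
   [false] is the first argument, [true] the second) and nullary (closed)
   terms for bottom/top. *)
Definition reduct (Sg : Signature) (tm tj : term Sg bool) (tb tt : term Sg Empty_set)
  (A : Alg Sg) : PreBDL :=
  {| bcar := acar A;
     bmeet := fun x y => teval A (fun b : bool => if b then y else x) tm;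
     bjoin := fun x y => teval A (fun b : bool => if b then y else x) tj;
     bbot := teval A (fun e : Empty_set => match e with end) tb;
     btop := teval A (fun e : Empty_set => match e with end) tt |}.
Arguments reduct {Sg} tm tj tb tt A.

Record DVariety := {
  dvar :> Variety;
  d_meet : term (vsig dvar) bool;
  d_join : term (vsig dvar) bool;
  d_bot : term (vsig dvar) Empty_set;
  d_top : term (vsig dvar) Empty_set;
  d_is_bdl : forall A : vobj dvar,
      is_bdl (reduct d_meet d_join d_bot d_top (proj1_sig A)) }.

Definition flatA (K : DVariety) (A : vobj K) : PreBDL :=
  reduct (d_meet K) (d_join K) (d_bot K) (d_top K) (proj1_sig A).
Arguments flatA {K} A.

Record PreSpace := {
  pcar :> Type;
  ple : pcar -> pcar -> Prop;
  popen : (pcar -> Prop) -> Prop }.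

Definition clopen (X : PreSpace) (U : pcar X -> Prop) :=
  popen X U /\ popen X (fun x => ~ U x).

Definition is_priestley (X : PreSpace) : Prop :=
  (forall x, ple X x x) /\
  (forall x y, ple X x y -> ple X y x -> x = y) /\
  (forall x y z, ple X x y -> ple X y z -> ple X x z) /\
  popen X (fun _ => True) /\ popen X (fun _ => False) /\
  (forall U V, popen X U -> popen X V -> popen X (fun x => U x /\ V x)) /\
  (forall F : (pcar X -> Prop) -> Prop, (forall U, F U -> popen X U) ->
     popen X (fun x => exists U, F U /\ U x)) /\
  (forall F : (pcar X -> Prop) -> Prop, (forall U, F U -> popen X U) ->
     (forall x, exists U, F U /\ U x) ->
     exists l : list (pcar X -> Prop),
       (forall U, In U l -> F U) /\ (forall x, exists U, In U l /\ U x)) /\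
  (forall x y, ~ ple X x y -> exists U, clopen X U /\
       (forall a b, ple X a b -> U a -> U b) /\ U x /\ ~ U y).

Record PSpace := { psp :> PreSpace; psp_ax : is_priestley psp }.

Definition monotone (X Y : PreSpace) (f : pcar X -> pcar Y) :=
  forall a b, ple X a b -> ple Y (f a) (f b).
Arguments monotone {X Y} f.

Definition continuous (X Y : PreSpace) (f : pcar X -> pcar Y) :=
  forall U, popen Y U -> popen X (fun x => U (f x)).
Arguments continuous {X Y} f.

(* embedding of Priestley spaces: an order embedding (continuity is part
   of being a Priestley morphism) *)
Definition p_embedding (X Y : PreSpace) (f : pcar X -> pcar Y) :=
  forall a b, ple Y (f a) (f b) <-> ple X a b.
Arguments p_embedding {X Y} f.

Definition pspace_iso (X Y : PreSpace) (f : pcar X -> pcar Y) :=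
  monotone f /\ continuous f /\
  exists g : pcar Y -> pcar X, monotone g /\ continuous g /\
    (forall x, g (f x) = x) /\ (forall y, f (g y) = y).
Arguments pspace_iso {X Y} f.

Definition dunion (X Y : PreSpace) : PreSpace :=
  {| pcar := (pcar X + pcar Y)%type;
     ple := fun u v => match u, v with
                       | inl a, inl b => ple X a b
                       | inr a, inr b => ple Y a b
                       | _, _ => False end;
     popen := fun U => popen X (fun a => U (inl a)) /\ popen Y (fun b => U (inr b)) |}.

Definition images_dunion (X1 X2 Y : PreSpace) (f1 : pcar X1 -> pcar Y)
  (f2 : pcar X2 -> pcar Y) : Prop :=
  (forall y, (exists a, f1 a = y) \/ (exists b, f2 b = y)) /\
  (forall a b, f1 a <> f2 b) /\
  (forall a b, ~ ple Y (f1 a) (f2 b) /\ ~ ple Y (f2 b) (f1 a)).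
Arguments images_dunion {X1 X2 Y} f1 f2.

(* H(L) = D(L,2): pointwise order, topology inherited from 2^L *)
Definition Hpre (L : PreBDL) : PreSpace :=
  {| pcar := BHom L two;
     ple := fun f g => forall a, bhfun f a = true -> bhfun g a = true;
     popen := fun U => forall f, U f ->
        exists l : list (bcar L * bool),
          (forall p, In p l -> bhfun f (fst p) = snd p) /\
          (forall g : BHom L two, (forall p, In p l -> bhfun g (fst p) = snd p) -> U g) |}.

(* K(X) = P(X,2): continuous order-preserving maps into the discrete 2 *)
Definition kcont (X : PreSpace) (f : pcar X -> bool) : Prop :=
  (forall a b, ple X a b -> f a = true -> f b = true) /\
  popen X (fun x => f x = true) /\ popen X (fun x => f x = false).
Arguments kcont {X} f.

Definition Kcar (X : PSpace) := { f : pcar X -> bool | kcont f }.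

Lemma open_ext (X : PreSpace) (U V : pcar X -> Prop) :
  (forall x, U x <-> V x) -> popen X U -> popen X V.
Proof.
  intros H HU. assert (E : U = V).
  { apply functional_extensionality; intro x; apply propositional_extensionality; auto. }
  rewrite <- E; exact HU.
Qed.

Lemma kcont_and (X : PSpace) (f g : pcar X -> bool) :
  kcont f -> kcont g -> kcont (fun x => andb (f x) (g x)).
Proof.
  destruct (psp_ax X) as (_ & _ & _ & _ & _ & Hi & Hu & _).
  intros (mf & tf & ff) (mg & tg & fg); split; [|split].
  - intros a b Hab. destruct (f a) eqn:Ea, (g a) eqn:Ga; simpl; intro H;
      try discriminate H.
    rewrite (mf a b Hab Ea), (mg a b Hab Ga). reflexivity.
  - eapply open_ext; [|exact (Hi _ _ tf tg)].
    intro x; cbv beta; destruct (f x), (g x); simpl; split; intro H;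
      repeat match goal with H : _ /\ _ |- _ => destruct H end;
      try split; try reflexivity; try discriminate; try assumption.
  - eapply open_ext;
      [|exact (Hu (fun U => U = (fun x => f x = false) \/ U = (fun x => g x = false))
                 ltac:(intros U [-> | ->]; assumption))].
    intro x; split.
    + intros [U [[-> | ->] HU]]; rewrite HU; [reflexivity|destruct (f x); reflexivity].
    + destruct (f x) eqn:Ef; simpl; intro H.
      * exists (fun x => g x = false); split; auto.
      * exists (fun x => f x = false); split; auto.
Qed.

Lemma kcont_or (X : PSpace) (f g : pcar X -> bool) :
  kcont f -> kcont g -> kcont (fun x => orb (f x) (g x)).
Proof.
  destruct (psp_ax X) as (_ & _ & _ & _ & _ & Hi & Hu & _).
  intros (mf & tf & ff) (mg & tg & fg); split; [|split].
  - intros a b Hab. destruct (f a) eqn:Ea, (g a) eqn:Ga; simpl; intro H;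
      try discriminate H.
    + rewrite (mf a b Hab Ea). reflexivity.
    + rewrite (mf a b Hab Ea). reflexivity.
    + rewrite (mg a b Hab Ga). destruct (f b); reflexivity.
  - eapply open_ext;
      [|exact (Hu (fun U => U = (fun x => f x = true) \/ U = (fun x => g x = true))
                 ltac:(intros U [-> | ->]; assumption))].
    intro x; split.
    + intros [U [[-> | ->] HU]]; rewrite HU; [reflexivity|destruct (f x); reflexivity].
    + destruct (f x) eqn:Ef; simpl; intro H.
      * exists (fun x => f x = true); split; auto.
      * exists (fun x => g x = true); split; auto.
  - eapply open_ext; [|exact (Hi _ _ ff fg)].
    intro x; cbv beta; destruct (f x), (g x); simpl; split; intro H;
      repeat match goal with H : _ /\ _ |- _ => destruct H end;
      try split; try reflexivity; try discriminate; try assumption.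
Qed.

Lemma kcont_const (X : PSpace) (b : bool) : @kcont X (fun _ => b).
Proof.
  destruct (psp_ax X) as (_ & _ & _ & HT & HF & _).
  split; [|split].
  - auto.
  - destruct b; [eapply open_ext; [|exact HT]|eapply open_ext; [|exact HF]];
      intro x; split; auto; try discriminate; intros [].
  - destruct b; [eapply open_ext; [|exact HF]|eapply open_ext; [|exact HT]];
      intro x; split; auto; try discriminate; intros [].
Qed.

Definition Kpre (X : PSpace) : PreBDL :=
  {| bcar := Kcar X;
     bmeet := fun f g => exist _ _ (kcont_and X _ _ (proj2_sig f) (proj2_sig g));
     bjoin := fun f g => exist _ _ (kcont_or X _ _ (proj2_sig f) (proj2_sig g));
     bbot := exist _ _ (kcont_const X false);
     btop := exist _ _ (kcont_const X true) |}.

Definition castB (L M : PreBDL) (h : L = M) (x : bcar L) : bcar M :=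
  match h in _ = M' return bcar M' with eq_refl => x end.
Arguments castB {L M} h x.

Definition castP (X Y : PreSpace) (h : X = Y) (x : pcar X) : pcar Y :=
  match h in _ = Y' return pcar Y' with eq_refl => x end.
Arguments castP {X Y} h x.

Record Cat := {
  cob :> Type;
  chom : cob -> cob -> Type;
  cid : forall a, chom a a;
  ccomp : forall a b c0, chom b c0 -> chom a b -> chom a c0;
  ccomp_id_l : forall a b (f : chom a b), ccomp a b b (cid b) f = f;
  ccomp_id_r : forall a b (f : chom a b), ccomp a a b f (cid a) = f;
  ccomp_assoc : forall a b c d (h : chom c d) (g : chom b c) (f : chom a b),
      ccomp a b d (ccomp b c d h g) f = ccomp a c d h (ccomp a b c g f) }.
Arguments chom {C} _ _ : rename.
Arguments cob : clear implicits.
Arguments cid {C} a : rename.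
Arguments ccomp {C a b d} _ _ : rename.

Definition is_coproduct (C : Cat) (x1 x2 y : cob C) (i1 : @chom C x1 y)
  (i2 : @chom C x2 y) : Prop :=
  forall z (f1 : @chom C x1 z) (f2 : @chom C x2 z),
    exists h : @chom C y z, ccomp h i1 = f1 /\ ccomp h i2 = f2 /\
      forall h' : @chom C y z, ccomp h' i1 = f1 -> ccomp h' i2 = f2 -> h' = h.
Arguments is_coproduct {C x1 x2 y} i1 i2.

(* a category X with a functor  flat : X -> P *)
Record PCat := {
  pcat :> Cat;
  fob : cob pcat -> PSpace;
  fmor : forall a b, @chom pcat a b -> pcar (fob a) -> pcar (fob b);
  fmor_mono : forall a b (f : @chom pcat a b), monotone (fmor a b f);
  fmor_cont : forall a b (f : @chom pcat a b), continuous (fmor a b f);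
  fmor_id : forall a x, fmor a a (cid a) x = x;
  fmor_comp : forall a b c (g : @chom pcat b c) (f : @chom pcat a b) x,
      fmor a c (ccomp g f) x = fmor b c g (fmor a b f x) }.
Arguments fob {P} _ : rename.
Arguments fmor {P a b} _ _ : rename.

Record RPD (K : DVariety) (X : PCat) := {
  D_ob : vobj K -> cob X;
  D_mor : forall A B : vobj K, homA A B -> chom (D_ob B) (D_ob A);
  E_ob : cob X -> vobj K;
  E_mor : forall x y : cob X, chom x y -> homA (E_ob y) (E_ob x);
  D_id : forall A, D_mor A A (aid A) = cid (D_ob A);
  D_comp : forall A B C (f : homA A B) (g : homA B C),
      D_mor A C (acomp g f) = ccomp (D_mor A B f) (D_mor B C g);
  E_id : forall x, E_mor x x (cid x) = aid (E_ob x);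
  E_comp : forall x y z (f : chom x y) (g : chom y z),
      E_mor x z (ccomp g f) = acomp (E_mor x y f) (E_mor y z g);
  unit : forall A, homA A (E_ob (D_ob A));
  unit_nat : forall A B (f : homA A B),
      acomp (E_mor _ _ (D_mor A B f)) (unit A) = acomp (unit B) f;
  unit_iso : forall A, exists g : homA (E_ob (D_ob A)) A,
      acomp g (unit A) = aid A /\ acomp (unit A) g = aid (E_ob (D_ob A));
  counit : forall x, chom x (D_ob (E_ob x));
  counit_nat : forall x y (g : chom x y),
      ccomp (D_mor _ _ (E_mor x y g)) (counit x) = ccomp (counit y) g;
  counit_iso : forall x, exists g : chom (D_ob (E_ob x)) x,
      ccomp g (counit x) = cid x /\ ccomp (counit x) g = cid (D_ob (E_ob x));
  (* flat o D = H o flat  (objects; on morphisms H is precomposition) *)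
  D_flat_ob : forall A, psp (fob (D_ob A)) = Hpre (flatA A);
  D_flat_mor : forall A B (f : homA A B) (x : pcar (fob (D_ob B))) (a : bcar (flatA A)),
      bhfun (castP (D_flat_ob A) (fmor (D_mor A B f) x)) a
      = bhfun (castP (D_flat_ob B) x) (ahfun f a);
  (* flat o E = K o flat  (objects; on morphisms K is precomposition) *)
  E_flat_ob : forall x, flatA (E_ob x) = Kpre (fob x);
  E_flat_mor : forall x y (g : chom x y) (a : bcar (flatA (E_ob y))) (p : pcar (fob x)),
      proj1_sig (castB (E_flat_ob x) (ahfun (E_mor x y g) a)) p
      = proj1_sig (castB (E_flat_ob y) a) (fmor g p);
  (* e_A^flat = e_{A^flat}  (evaluation a |-> (x |-> x(a))) *)
  unit_flat : forall A (a : bcar (flatA A)) (x : pcar (fob (D_ob A))),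
      proj1_sig (castB (E_flat_ob (D_ob A)) (ahfun (unit A) a)) x
      = bhfun (castP (D_flat_ob A) x) a;
  (* eps_X^flat = eps_{X^flat}  (evaluation p |-> (f |-> f(p))) *)
  counit_flat : forall x (p : pcar (fob x)) (a : bcar (flatA (E_ob x))),
      bhfun (castP (D_flat_ob (E_ob x)) (fmor (counit x) p)) a
      = proj1_sig (castB (E_flat_ob x) a) p }.

From Stdlib Require Import List FunctionalExtensionality Classical ClassicalEpsilon ProofIrrelevance Bool.

(* The coproduct of x1 and x2 is D(E x1 * E x2): D turns the product of algebras, whose
   projections are jointly monic, into a coproduct because D is a dual equivalence. Its
   underlying space is the space of prime filters of (E x1 * E x2)^flat, and each such prime
   filter is the preimage of one on exactly one factor (it contains exactly one of (1,0) and
   (0,1)); so the underlying space is the disjoint union of the two dual spaces, the continuous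
   order-bijection from the disjoint union being a homeomorphism by compactness. Conversely,
   when Y is the disjoint union of the images, the comparison morphism from this coproduct to Y
   is a Priestley isomorphism; E turns it into a bijective homomorphism (flat commutes with E),
   and an X-morphism that E sends to an isomorphism is one. *)

Section PriestleyAxioms.
Variable X : PSpace.

Lemma ple_refl (x : pcar X) : ple X x x.
Proof. exact (proj1 (psp_ax X) x). Qed.

Lemma ple_antisym (x y : pcar X) : ple X x y -> ple X y x -> x = y.
Proof. exact (proj1 (proj2 (psp_ax X)) x y). Qed.

Lemma open_full : popen X (fun _ => True).
Proof. apply (psp_ax X). Qed.

Lemma open_inter (U V : pcar X -> Prop) :
  popen X U -> popen X V -> popen X (fun x => U x /\ V x).
Proof. apply (psp_ax X). Qed.

Lemma open_union (F : (pcar X -> Prop) -> Prop) :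
  (forall U, F U -> popen X U) -> popen X (fun x => exists U, F U /\ U x).
Proof. apply (psp_ax X). Qed.

Lemma compact_cover (F : (pcar X -> Prop) -> Prop) :
  (forall U, F U -> popen X U) -> (forall x, exists U, F U /\ U x) ->
  exists l, (forall U, In U l -> F U) /\ (forall x, exists U, In U l /\ U x).
Proof. apply (psp_ax X). Qed.

Lemma priestley_separation (x y : pcar X) : ~ ple X x y ->
  exists U, clopen X U /\ (forall a b, ple X a b -> U a -> U b) /\ U x /\ ~ U y.
Proof. apply (psp_ax X). Qed.

Lemma open_not_not (U : pcar X -> Prop) : popen X U -> popen X (fun x => ~ ~ U x).
Proof. apply open_ext; intro x; split; [tauto|apply NNPP]. Qed.

Lemma clopen_separation (u y : pcar X) : u <> y -> exists W, clopen X W /\ W u /\ ~ W y.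
Proof.
  intro Hne. destruct (classic (ple X u y)) as [Huy|Huy].
  - assert (Hyu : ~ ple X y u) by (intro; apply Hne, ple_antisym; auto).
    destruct (priestley_separation _ _ Hyu) as (U & [HU HUc] & _ & Uy & Uu).
    exists (fun x => ~ U x); repeat split; auto using open_not_not.
  - destruct (priestley_separation _ _ Huy) as (U & HU & _ & Uu & Uy). eauto.
Qed.

End PriestleyAxioms.

(* The finitely many clopens [W] obtained from a subcover separate [y] from the image of [A];
   removing them one at a time from the whole space keeps a neighbourhood of [y]. *)
Lemma open_nbhd_avoiding_cover (X Y : PSpace) (phi : pcar X -> pcar Y) (A : pcar X -> Prop)
  (y : pcar Y) (l : list (pcar X -> Prop)) :
  (forall U, In U l -> U = (fun x => ~ A x) \/
     exists W, clopen Y W /\ ~ W y /\ U = (fun x => W (phi x))) ->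
  exists V, popen Y V /\ V y /\
    forall x, A x -> (exists U, In U l /\ U x) -> ~ V (phi x).
Proof.
  induction l as [|U0 l IH]; intro Hl.
  - exists (fun _ => True). split; [apply open_full|split; [exact I|]].
    intros x _ [U [[] _]].
  - destruct IH as (V & HV & Vy & HVA); [intros U HU; apply Hl; right; exact HU|].
    destruct (Hl U0 (or_introl eq_refl)) as [->|(W & [_ HWc] & Wy & ->)].
    + exists V. split; [exact HV|split; [exact Vy|]].
      intros x Ax [U [[<-|HU] Ux]]; [contradiction|eauto].
    + exists (fun z => V z /\ ~ W z). split; [apply open_inter; auto|split; [auto|]].
      intros x Ax [U [[<-|HU] Ux]] [Vx Wx]; [contradiction|].
      exact (HVA x Ax (ex_intro _ U (conj HU Ux)) Vx).
Qed.

Lemma closed_image (X Y : PSpace) (phi : pcar X -> pcar Y) (A : pcar X -> Prop) :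
  continuous phi -> popen X (fun x => ~ A x) ->
  popen Y (fun y => ~ exists a, A a /\ phi a = y).
Proof.
  intros Hc HA. set (S := fun y => ~ exists a, A a /\ phi a = y).
  apply (open_ext _ (fun y => exists V, (popen Y V /\ forall z, V z -> S z) /\ V y));
    [|apply open_union; intros V [HV _]; exact HV].
  intro y; split; [intros [V [[_ HVS] Vy]]; exact (HVS y Vy)|intro Sy].
  set (G := fun U : pcar X -> Prop => U = (fun x => ~ A x) \/
              exists W, clopen Y W /\ ~ W y /\ U = (fun x => W (phi x))).
  assert (Hcov : forall x, exists U, G U /\ U x).
  { intro x. destruct (classic (A x)) as [Ax|Ax].
    - assert (Hne : phi x <> y) by (intro E; apply Sy; eauto).
      destruct (clopen_separation Y _ _ Hne) as (W & HW & Wx & Wy).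
      exists (fun x => W (phi x)). split; [right; eauto|exact Wx].
    - exists (fun x => ~ A x). split; [left|]; auto. }
  destruct (compact_cover X G) as (l & HlG & Hl); [|exact Hcov|].
  { intros U [->|(W & [HW _] & _ & ->)]; auto. }
  destruct (open_nbhd_avoiding_cover X Y phi A y l HlG) as (V & HV & Vy & HVA).
  exists V. split; [split; [exact HV|]|exact Vy].
  intros z Vz [a [Aa <-]]. exact (HVA a Aa (Hl a) Vz).
Qed.

Lemma pspace_iso_of_closed_bijection (Z Y : PreSpace) (f : pcar Z -> pcar Y) :
  p_embedding f -> continuous f ->
  (forall a b, f a = f b -> a = b) -> (forall y, exists a, f a = y) ->
  (forall U, popen Z U -> popen Y (fun y => ~ exists a, ~ U a /\ f a = y)) ->
  pspace_iso f.
Proof.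
  intros Hemb Hc Hinj Hsurj Hclosed.
  set (g := fun y => proj1_sig (constructive_indefinite_description _ (Hsurj y))).
  assert (fg : forall y, f (g y) = y)
    by (intro y; exact (proj2_sig (constructive_indefinite_description _ (Hsurj y)))).
  assert (gf : forall a, g (f a) = a) by (intro a; apply Hinj, fg).
  split; [intros a b; apply Hemb|split; [exact Hc|exists g]].
  split; [|split; [|split; [exact gf|exact fg]]].
  - intros y y' H. apply Hemb. rewrite !fg. exact H.
  - intros U HU. refine (open_ext _ _ _ _ (Hclosed U HU)).
    intro y. rewrite <- (fg y), gf. split; [intro H; apply NNPP; intro Hn; eauto|].
    intros Ua [a [Hna E]]. apply Hinj in E. subst. contradiction.
Qed.

Definition copair {X1 X2 Y : PreSpace} (f1 : pcar X1 -> pcar Y) (f2 : pcar X2 -> pcar Y)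
  (u : pcar (dunion X1 X2)) : pcar Y :=
  match u with inl a => f1 a | inr b => f2 b end.

Section Copair.
Variables (X1 X2 Y : PSpace) (f1 : pcar X1 -> pcar Y) (f2 : pcar X2 -> pcar Y).
Hypotheses (f1_cont : continuous f1) (f2_cont : continuous f2)
  (f1_emb : p_embedding f1) (f2_emb : p_embedding f2) (f12_img : images_dunion f1 f2).

Lemma copair_p_embedding : p_embedding (copair f1 f2).
Proof.
  destruct f12_img as (_ & _ & Hinc).
  intros [a|b] [a'|b']; simpl; try apply f1_emb; try apply f2_emb;
    split; try contradiction; apply Hinc.
Qed.

Lemma copair_injective (u v : pcar (dunion X1 X2)) : copair f1 f2 u = copair f1 f2 v -> u = v.
Proof.
  destruct f12_img as (_ & Hdisj & _).
  destruct u as [a|b], v as [a'|b']; simpl; intro E;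
    [|destruct (Hdisj _ _ E)|destruct (Hdisj _ _ (eq_sym E))|]; f_equal;
    apply ple_antisym; first [apply f1_emb|apply f2_emb]; rewrite E; apply ple_refl.
Qed.

Lemma copair_surjective (y : pcar Y) : exists u, copair f1 f2 u = y.
Proof.
  destruct f12_img as (Hcov & _). destruct (Hcov y) as [[a Ha]|[b Hb]].
  - exists (inl a); exact Ha.
  - exists (inr b); exact Hb.
Qed.

Lemma copair_continuous : continuous (copair f1 f2).
Proof. intros U HU. split; [apply f1_cont|apply f2_cont]; exact HU. Qed.

Lemma copair_closed_map (U : pcar (dunion X1 X2) -> Prop) : popen (dunion X1 X2) U ->
  popen Y (fun y => ~ exists u, ~ U u /\ copair f1 f2 u = y).
Proof.
  intros [HU1 HU2].
  refine (open_ext _ _ _ _ (open_inter _ _ _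
    (closed_image _ _ f1 (fun a => ~ U (inl a)) f1_cont (open_not_not _ _ HU1))
    (closed_image _ _ f2 (fun b => ~ U (inr b)) f2_cont (open_not_not _ _ HU2)))).
  intro y; split.
  - intros [H1 H2] [[a|b] [Hu E]]; [apply H1|apply H2]; eauto.
  - intro H; split; intros [c [Hc E]]; apply H; eauto.
Qed.

Lemma copair_pspace_iso : pspace_iso (copair f1 f2).
Proof.
  apply pspace_iso_of_closed_bijection; auto using copair_p_embedding, copair_continuous,
    copair_injective, copair_surjective, copair_closed_map.
Qed.

End Copair.

Lemma pspace_iso_comp (X Y Z : PreSpace) (f : pcar X -> pcar Y) (g : pcar Y -> pcar Z)
  (h : pcar X -> pcar Z) :
  pspace_iso f -> pspace_iso g -> (forall x, h x = g (f x)) -> pspace_iso h.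
Proof.
  intros (fm & fc & f' & f'm & f'c & f'f & ff') (gm & gc & g' & g'm & g'c & g'g & gg') E.
  replace h with (fun x => g (f x)) by (apply functional_extensionality; intro; auto).
  split; [intros a b H; apply gm, fm, H|split].
  { intros U HU. apply (fc (fun y => U (g y))), gc, HU. }
  exists (fun z => f' (g' z)).
  split; [intros a b H; apply f'm, g'm, H|split].
  { intros U HU. apply (g'c (fun y => U (f' y))), f'c, HU. }
  split; intro; [rewrite g'g|rewrite ff']; auto.
Qed.

Lemma pspace_iso_inv (X Y : PreSpace) (f : pcar X -> pcar Y) :
  pspace_iso f -> exists g, pspace_iso g /\ forall y, f (g y) = y.
Proof.
  intros (fm & fc & g & gm & gc & gf & fg). exists g. split; [|exact fg].
  split; [exact gm|split; [exact gc|exists f; auto]].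
Qed.

Lemma pspace_iso_cancel_r (U Y Z : PreSpace) (iota : pcar U -> pcar Y) (psi : pcar U -> pcar Z)
  (h : pcar Y -> pcar Z) :
  pspace_iso iota -> pspace_iso psi -> (forall u, h (iota u) = psi u) -> pspace_iso h.
Proof.
  intros Hi Hpsi E. destruct (pspace_iso_inv _ _ _ Hi) as (iota' & Hi' & Ei).
  apply (pspace_iso_comp _ _ _ iota' psi h Hi' Hpsi). intro y. rewrite <- E, Ei. reflexivity.
Qed.

Lemma pspace_iso_dsum (X1 X2 Y1 Y2 : PreSpace) (g1 : pcar X1 -> pcar Y1) (g2 : pcar X2 -> pcar Y2) :
  pspace_iso g1 -> pspace_iso g2 ->
  pspace_iso (copair (Y := dunion Y1 Y2) (fun a => inl (g1 a)) (fun b => inr (g2 b))).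
Proof.
  intros (m1 & c1 & h1 & hm1 & hc1 & hg1 & gh1) (m2 & c2 & h2 & hm2 & hc2 & hg2 & gh2).
  split; [intros [a|b] [a'|b']; simpl; auto|split].
  - intros U [HU1 HU2]. split; [apply (c1 (fun a => U (inl a)))|apply (c2 (fun b => U (inr b)))];
      assumption.
  - exists (copair (Y := dunion X1 X2) (fun a => inl (h1 a)) (fun b => inr (h2 b))).
    split; [intros [a|b] [a'|b']; simpl; auto|split].
    + intros U [HU1 HU2].
      split; [apply (hc1 (fun a => U (inl a)))|apply (hc2 (fun b => U (inr b)))]; assumption.
    + split; intros [a|b]; simpl; f_equal; auto.
Qed.

Section CategoryFacts.
Context {C : Cat}.

Definition isoC {a b : cob C} (f : chom a b) :=
  exists g : chom b a, ccomp g f = cid a /\ ccomp f g = cid b.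

Definition jointly_mono {p a1 a2 : cob C} (p1 : chom p a1) (p2 : chom p a2) :=
  forall z (x y : chom z p), ccomp p1 x = ccomp p1 y -> ccomp p2 x = ccomp p2 y -> x = y.

Lemma iso_comp (a b c : cob C) (f : chom a b) (g : chom b c) :
  isoC f -> isoC g -> isoC (ccomp g f).
Proof.
  intros [f' [f1 f2]] [g' [g1 g2]]. exists (ccomp f' g'). split.
  - rewrite ccomp_assoc, <- (ccomp_assoc _ _ _ _ _ g' g f), g1, ccomp_id_l; exact f1.
  - rewrite ccomp_assoc, <- (ccomp_assoc _ _ _ _ _ f f' g'), f2, ccomp_id_l; exact g2.
Qed.

Lemma iso_mono (a b c : cob C) (u : chom b c) (f g : chom a b) :
  isoC u -> ccomp u f = ccomp u g -> f = g.
Proof.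
  intros [u' [u1 _]] E.
  rewrite <- (ccomp_id_l _ _ _ f), <- (ccomp_id_l _ _ _ g), <- u1, !ccomp_assoc, E.
  reflexivity.
Qed.

Lemma iso_epi (a b c : cob C) (u : chom a b) (f g : chom b c) :
  isoC u -> ccomp f u = ccomp g u -> f = g.
Proof.
  intros [u' [_ u2]] E.
  rewrite <- (ccomp_id_r _ _ _ f), <- (ccomp_id_r _ _ _ g), <- u2, <- !ccomp_assoc, E.
  reflexivity.
Qed.

Lemma iso_cancel (a b c d : cob C) (h : chom a b) (u : chom b d) (w : chom a c) (v : chom c d) :
  ccomp u h = ccomp v w -> isoC u -> isoC v -> isoC w -> isoC h.
Proof.
  intros E [u' [u1 u2]] Hv Hw.
  replace h with (ccomp u' (ccomp v w)).
  - apply iso_comp; [apply iso_comp; assumption|]. exists u; auto.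
  - rewrite <- E, <- ccomp_assoc, u1, ccomp_id_l. reflexivity.
Qed.

Lemma jointly_mono_conj (p p' a1 a2 a1' a2' : cob C) (p1 : chom p a1) (p2 : chom p a2)
  (q1 : chom p' a1') (q2 : chom p' a2') (u : chom p p') (v1 : chom a1 a1') (v2 : chom a2 a2') :
  jointly_mono p1 p2 -> isoC u -> isoC v1 -> isoC v2 ->
  ccomp q1 u = ccomp v1 p1 -> ccomp q2 u = ccomp v2 p2 -> jointly_mono q1 q2.
Proof.
  intros Hp [u' [u1 u2]] Hv1 Hv2 E1 E2 z x y Ex Ey.
  assert (Hback : forall k a (q : chom p' k) (v : chom a k) (r : chom p a),
             ccomp q u = ccomp v r ->
             forall t : chom z p', ccomp q t = ccomp v (ccomp r (ccomp u' t))).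
  { intros k a q v r E t.
    rewrite <- (ccomp_assoc _ _ _ _ _ v r), <- E, ccomp_assoc,
      <- (ccomp_assoc _ _ _ _ _ u u' t), u2, ccomp_id_l.
    reflexivity. }
  apply (iso_mono _ _ _ u'); [exists u; auto|]. apply Hp.
  - apply (iso_mono _ _ _ v1 _ _ Hv1). rewrite <- (Hback _ _ _ _ _ E1 x), <- (Hback _ _ _ _ _ E1 y).
    exact Ex.
  - apply (iso_mono _ _ _ v2 _ _ Hv2). rewrite <- (Hback _ _ _ _ _ E2 x), <- (Hback _ _ _ _ _ E2 y).
    exact Ey.
Qed.

Lemma coproduct_transfer (x1 x2 y y' : cob C) (i1 : chom x1 y) (i2 : chom x2 y) (t : chom y y') :
  is_coproduct i1 i2 -> isoC t -> is_coproduct (ccomp t i1) (ccomp t i2).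
Proof.
  intros Hc [t' [t1 t2]] z f1 f2.
  destruct (Hc z f1 f2) as (h & h1 & h2 & hu).
  exists (ccomp h t'). split; [|split].
  - rewrite <- ccomp_assoc, (ccomp_assoc _ _ _ _ _ h t' t), t1, ccomp_id_r. exact h1.
  - rewrite <- ccomp_assoc, (ccomp_assoc _ _ _ _ _ h t' t), t1, ccomp_id_r. exact h2.
  - intros h' e1 e2. rewrite <- ccomp_assoc in e1, e2.
    rewrite <- (hu _ e1 e2), ccomp_assoc, t2, ccomp_id_r. reflexivity.
Qed.

Lemma coproduct_unique (x1 x2 y y' : cob C) (i1 : chom x1 y) (i2 : chom x2 y)
  (i1' : chom x1 y') (i2' : chom x2 y') :
  is_coproduct i1 i2 -> is_coproduct i1' i2' ->
  exists t : chom y y', isoC t /\ ccomp t i1 = i1' /\ ccomp t i2 = i2'.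
Proof.
  intros H H'.
  assert (Hendo : forall y0 (j1 : chom x1 y0) (j2 : chom x2 y0) (e : chom y0 y0),
             is_coproduct j1 j2 -> ccomp e j1 = j1 -> ccomp e j2 = j2 -> e = cid y0).
  { intros y0 j1 j2 e Hj E1 E2. destruct (Hj y0 j1 j2) as (r & _ & _ & ru).
    rewrite (ru e), (ru (cid y0)); rewrite ?ccomp_id_l; auto. }
  destruct (H y' i1' i2') as (t & t1 & t2 & _).
  destruct (H' y i1 i2) as (s & s1 & s2 & _).
  exists t; split; [exists s; split|split; assumption].
  - apply (Hendo y i1 i2); auto; rewrite ccomp_assoc; [rewrite t1|rewrite t2]; assumption.
  - apply (Hendo y' i1' i2'); auto; rewrite ccomp_assoc; [rewrite s1|rewrite s2]; assumption.
Qed.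

End CategoryFacts.

Lemma fmor_pspace_iso (P : PCat) (a b : cob P) (t : chom a b) : isoC t -> pspace_iso (fmor t).
Proof.
  intros [t' [E1 E2]]. split; [apply fmor_mono|split; [apply fmor_cont|]].
  exists (fmor t'). split; [apply fmor_mono|split; [apply fmor_cont|split]];
    intro x; rewrite <- fmor_comp; [rewrite E1|rewrite E2]; apply fmor_id.
Qed.

Lemma AHom_eq (Sg : Signature) (A B : Alg Sg) (f g : AHom A B) :
  (forall x, f x = g x) -> f = g.
Proof.
  destruct f as [f hf], g as [g hg]; simpl; intro E.
  assert (f = g) as <- by (apply functional_extensionality; exact E).
  f_equal; apply proof_irrelevance.
Qed.

Definition alg_cat (K : Variety) : Cat := {|
  cob := vobj K;
  chom := @homA K;
  cid := @aid K;
  ccomp := fun A B C g f => acomp g f;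
  ccomp_id_l := fun A B f => AHom_eq _ _ _ (acomp (aid B) f) f (fun x => eq_refl);
  ccomp_id_r := fun A B f => AHom_eq _ _ _ (acomp f (aid A)) f (fun x => eq_refl);
  ccomp_assoc := fun A B C D h g f =>
    AHom_eq _ _ _ (acomp (acomp h g) f) (acomp h (acomp g f)) (fun x => eq_refl) |}.

Lemma bijective_homA_iso (K : Variety) (A B : vobj K) (f : homA A B) :
  (forall x y, f x = f y -> x = y) -> (forall y, exists x, f x = y) -> isoC (C := alg_cat K) f.
Proof.
  intros Hi Hs.
  set (g := fun y => proj1_sig (constructive_indefinite_description _ (Hs y))).
  assert (fg : forall y, f (g y) = y)
    by (intro y; exact (proj2_sig (constructive_indefinite_description _ (Hs y)))).
  assert (Hg : is_alg_hom (A := proj1_sig B) (B := proj1_sig A) g).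
  { intros o args. apply Hi. rewrite fg, (ahom f). f_equal.
    apply functional_extensionality; intro i. symmetry; apply fg. }
  exists (Build_AHom g Hg). split; apply AHom_eq; simpl; auto.
Qed.

Definition prodAlg (Sg : Signature) (A B : Alg Sg) : Alg Sg := {|
  acar := (acar A * acar B)%type;
  aop := fun o args => (aop A o (fun i => fst (args i)), aop B o (fun i => snd (args i))) |}.

Lemma teval_prod (Sg : Signature) (A B : Alg Sg) (V : Type) (v : V -> acar A * acar B)
  (t : term Sg V) :
  teval (prodAlg Sg A B) v t = (teval A (fun x => fst (v x)) t, teval B (fun x => snd (v x)) t).
Proof.
  induction t as [x|o args IH]; simpl; [destruct (v x); reflexivity|].
  f_equal; f_equal; apply functional_extensionality; intro i; rewrite IH; reflexivity.
Qed.

Section ProductAlgebra.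
Variables (K : Variety) (A1 A2 : vobj K).

Lemma prodAlg_models : models K (prodAlg _ (proj1_sig A1) (proj1_sig A2)).
Proof.
  intros l r E v. rewrite !teval_prod.
  f_equal; [apply (proj2_sig A1)|apply (proj2_sig A2)]; exact E.
Qed.

Definition prodV : vobj K := exist _ _ prodAlg_models.

Definition proj1V : homA prodV A1 :=
  @Build_AHom _ (proj1_sig prodV) (proj1_sig A1) fst (fun o args => eq_refl).
Definition proj2V : homA prodV A2 :=
  @Build_AHom _ (proj1_sig prodV) (proj1_sig A2) snd (fun o args => eq_refl).

Definition pairV (B : vobj K) (f1 : homA B A1) (f2 : homA B A2) : homA B prodV.
Proof.
  refine (@Build_AHom _ (proj1_sig B) (proj1_sig prodV) (fun b => (f1 b, f2 b)) _).
  intros o args. simpl. rewrite (ahom f1), (ahom f2). reflexivity.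
Defined.

Lemma proj1V_pairV B f1 f2 : acomp proj1V (pairV B f1 f2) = f1.
Proof. apply AHom_eq; reflexivity. Qed.

Lemma proj2V_pairV B f1 f2 : acomp proj2V (pairV B f1 f2) = f2.
Proof. apply AHom_eq; reflexivity. Qed.

Lemma projV_jointly_mono : jointly_mono (C := alg_cat K) proj1V proj2V.
Proof.
  intros B x y E1 E2. apply AHom_eq; intro b.
  apply (f_equal (fun h : homA B A1 => ahfun h b)) in E1.
  apply (f_equal (fun h : homA B A2 => ahfun h b)) in E2.
  simpl in E1, E2. apply injective_projections; assumption.
Qed.

End ProductAlgebra.

Lemma BHom_eq (L M : PreBDL) (f g : BHom L M) : (forall x, f x = g x) -> f = g.
Proof.
  destruct f as [f hf], g as [g hg]; simpl; intro E.
  assert (f = g) as <- by (apply functional_extensionality; exact E).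
  f_equal; apply proof_irrelevance.
Qed.

Lemma bhom_top_bot (L : PreBDL) (h : BHom L two) : h (btop L) = true /\ h (bbot L) = false.
Proof. destruct (bhom h) as (_ & _ & Hb & Ht). split; assumption. Qed.

Lemma bhom_meet_true (L : PreBDL) (h : BHom L two) (u v : bcar L) :
  h u = true -> h v = h (bmeet L v u).
Proof.
  intro Hu. destruct (bhom h) as (Hm & _). rewrite Hm, Hu. symmetry; apply andb_true_r.
Qed.

Lemma bdl_bot_top_laws (L : PreBDL) : is_bdl L ->
  (forall x, bmeet L x (btop L) = x) /\ (forall x, bjoin L x (bbot L) = x) /\
  (forall x, bmeet L x (bbot L) = bbot L) /\ (forall x, bjoin L (bbot L) x = x).
Proof.
  intros (_ & _ & mc & jc & _ & absorb & _ & jb & mt).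
  assert (bj : forall x, bjoin L (bbot L) x = x) by (intro x; rewrite jc; apply jb).
  split; [exact mt|split; [exact jb|split; [|exact bj]]].
  intro x. rewrite mc, <- (bj (bmeet L (bbot L) x)). apply absorb.
Qed.

Definition prodB (L M : PreBDL) : PreBDL := {|
  bcar := (bcar L * bcar M)%type;
  bmeet := fun u v => (bmeet L (fst u) (fst v), bmeet M (snd u) (snd v));
  bjoin := fun u v => (bjoin L (fst u) (fst v), bjoin M (snd u) (snd v));
  bbot := (bbot L, bbot M);
  btop := (btop L, btop M) |}.

(* A prime filter of [L * M] is the preimage of a prime filter of one factor, singled out by
   which of the complementary elements [(1, 0)] and [(0, 1)] it contains. *)
Section ProductPrimeFilters.
Variables (L M : PreBDL) (HL : is_bdl L) (HM : is_bdl M) (h : BHom (prodB L M) two).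

Lemma prod_bhom_factor1 : h (btop L, bbot M) = true ->
  exists x : BHom L two, forall a, h a = x (fst a).
Proof.
  intro Ht. destruct (bhom h) as (hm & hj & hb & _).
  destruct (bdl_bot_top_laws L HL) as (mt1 & _ & _ & _).
  destruct (bdl_bot_top_laws M HM) as (_ & jb2 & mb2 & _).
  assert (Hx : bdl_hom (L := L) (M := two) (fun a => h (a, bbot M))).
  { split; [|split; [|split]].
    - intros a b. rewrite <- hm. simpl. rewrite mb2. reflexivity.
    - intros a b. rewrite <- hj. simpl. rewrite jb2. reflexivity.
    - exact hb.
    - exact Ht. }
  exists (Build_BHom _ _ _ Hx). intros [a b]. simpl.
  rewrite (bhom_meet_true _ h _ _ Ht). simpl. rewrite mt1, mb2. reflexivity.
Qed.

Lemma prod_bhom_factor2 : h (bbot L, btop M) = true ->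
  exists x : BHom M two, forall a, h a = x (snd a).
Proof.
  intro Ht. destruct (bhom h) as (hm & hj & hb & _).
  destruct (bdl_bot_top_laws L HL) as (_ & jb1 & mb1 & _).
  destruct (bdl_bot_top_laws M HM) as (mt2 & _ & _ & _).
  assert (Hx : bdl_hom (L := M) (M := two) (fun a => h (bbot L, a))).
  { split; [|split; [|split]].
    - intros a b. rewrite <- hm. simpl. rewrite mb1. reflexivity.
    - intros a b. rewrite <- hj. simpl. rewrite jb1. reflexivity.
    - exact hb.
    - exact Ht. }
  exists (Build_BHom _ _ _ Hx). intros [a b]. simpl.
  rewrite (bhom_meet_true _ h _ _ Ht). simpl. rewrite mt2, mb1. reflexivity.
Qed.

Lemma prod_bhom_factor :
  (exists x : BHom L two, forall a, h a = x (fst a)) \/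
  (exists x : BHom M two, forall a, h a = x (snd a)).
Proof.
  destruct (bhom h) as (_ & hj & _ & ht).
  destruct (bdl_bot_top_laws L HL) as (_ & jb1 & _ & _).
  destruct (bdl_bot_top_laws M HM) as (_ & _ & _ & bj2).
  assert (E : orb (h (btop L, bbot M)) (h (bbot L, btop M)) = true).
  { change (bjoin two (h (btop L, bbot M)) (h (bbot L, btop M)) = true).
    rewrite <- hj. simpl. rewrite jb1, bj2. exact ht. }
  apply orb_true_iff in E as [E|E]; [left; apply prod_bhom_factor1|right; apply prod_bhom_factor2];
    exact E.
Qed.

End ProductPrimeFilters.

Lemma flatA_prodV_ops (K : DVariety) (A1 A2 : vobj K) :
  bmeet (flatA (prodV K A1 A2)) = bmeet (prodB (flatA A1) (flatA A2)) /\
  bjoin (flatA (prodV K A1 A2)) = bjoin (prodB (flatA A1) (flatA A2)) /\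
  bbot (flatA (prodV K A1 A2)) = bbot (prodB (flatA A1) (flatA A2)) /\
  btop (flatA (prodV K A1 A2)) = btop (prodB (flatA A1) (flatA A2)).
Proof.
  unfold flatA, reduct, prodB; simpl.
  split; [|split; [|split]];
    repeat (apply functional_extensionality; intro); rewrite teval_prod;
    f_equal; f_equal; apply functional_extensionality; intros []; reflexivity.
Qed.

Lemma bdl_hom_flat_prodV (K : DVariety) (A1 A2 : vobj K)
  (f : bcar (flatA (prodV K A1 A2)) -> bool) :
  bdl_hom (M := two) f -> bdl_hom (L := prodB (flatA A1) (flatA A2)) (M := two) f.
Proof.
  destruct (flatA_prodV_ops K A1 A2) as (Em & Ej & Eb & Et).
  unfold bdl_hom. rewrite Em, Ej, Eb, Et. exact (fun H => H).
Qed.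

Lemma castB_inj (L M : PreBDL) (h : L = M) x y : castB h x = castB h y -> x = y.
Proof. destruct h; exact (fun E => E). Qed.

Lemma castB_surj (L M : PreBDL) (h : L = M) y : exists x, castB h x = y.
Proof. destruct h; exists y; reflexivity. Qed.

Lemma castP_inj (X Y : PreSpace) (h : X = Y) x y : castP h x = castP h y -> x = y.
Proof. destruct h; exact (fun E => E). Qed.

Lemma castP_surj (X Y : PreSpace) (h : X = Y) y : exists x, castP h x = y.
Proof. destruct h; exists y; reflexivity. Qed.

Lemma castP_ple (X Y : PreSpace) (h : X = Y) x y : ple Y (castP h x) (castP h y) <-> ple X x y.
Proof. destruct h; reflexivity. Qed.

Lemma Kcar_eq (X : PSpace) (f g : Kcar X) : (forall p, proj1_sig f p = proj1_sig g p) -> f = g.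
Proof.
  destruct f as [f hf], g as [g hg]; simpl; intro E.
  apply subset_eq_compat, functional_extensionality, E.
Qed.

Section Duality.
Variables (K : DVariety) (X : PCat) (R : RPD K X).

Local Notation Do := (D_ob _ _ R).
Local Notation Eo := (E_ob _ _ R).
Local Notation Dm := (D_mor _ _ R _ _).
Local Notation Em := (E_mor _ _ R _ _).
Local Notation eta := (unit _ _ R).
Local Notation eps := (counit _ _ R).
Local Notation toH A := (castP (D_flat_ob _ _ R A)).

Lemma counit_isoC (x : cob X) : isoC (eps x).
Proof. exact (counit_iso _ _ R x). Qed.

Lemma unit_isoC (A : vobj K) : isoC (C := alg_cat K) (eta A).
Proof. exact (unit_iso _ _ R A). Qed.

Lemma D_mor_isoC (A B : vobj K) (f : homA A B) : isoC (C := alg_cat K) f -> isoC (Dm f).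
Proof.
  intros [g [g1 g2]]. change (acomp g f = aid A) in g1. change (acomp f g = aid B) in g2.
  exists (Dm g). split; rewrite <- D_comp; [rewrite g2|rewrite g1]; apply D_id.
Qed.

Lemma E_faithful (x y : cob X) (f g : chom x y) : Em f = Em g -> f = g.
Proof.
  intro E. apply (iso_mono _ _ _ (eps y)); [apply counit_isoC|].
  rewrite <- !counit_nat, E. reflexivity.
Qed.

Lemma isoC_of_E_isoC (x y : cob X) (h : chom x y) : isoC (C := alg_cat K) (Em h) -> isoC h.
Proof.
  intro Hh. apply (iso_cancel _ _ _ _ h (eps y) (eps x) (Dm (Em h))).
  - symmetry; apply counit_nat.
  - apply counit_isoC.
  - apply D_mor_isoC, Hh.
  - apply counit_isoC.
Qed.

Lemma E_mor_injective (x y : cob X) (h : chom x y) :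
  (forall q, exists p, fmor h p = q) -> forall a b, Em h a = Em h b -> a = b.
Proof.
  intros Hs a b E. apply (castB_inj _ _ (E_flat_ob _ _ R y)), Kcar_eq. intro q.
  destruct (Hs q) as [p <-]. rewrite <- !E_flat_mor, E. reflexivity.
Qed.

Lemma E_mor_surjective (x y : cob X) (h : chom x y) (g : pcar (fob y) -> pcar (fob x)) :
  monotone g -> continuous g -> (forall p, g (fmor h p) = p) -> forall b, exists a, Em h a = b.
Proof.
  intros gm gc gh b. destruct (castB (E_flat_ob _ _ R x) b) as [f [fm [ft ff]]] eqn:Ef.
  assert (Hk : kcont (X := fob y) (fun q => f (g q))).
  { split; [|split].
    - intros q q' H. apply fm, gm, H.
    - apply (gc (fun p => f p = true)), ft.
    - apply (gc (fun p => f p = false)), ff. }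
  destruct (castB_surj _ _ (E_flat_ob _ _ R y) (exist _ _ Hk)) as [a Ha].
  exists a. apply (castB_inj _ _ (E_flat_ob _ _ R x)). rewrite Ef. apply Kcar_eq. intro p.
  rewrite E_flat_mor, Ha. simpl. rewrite gh. reflexivity.
Qed.

Lemma isoC_of_flat_iso (x y : cob X) (h : chom x y) : pspace_iso (fmor h) -> isoC h.
Proof.
  intros (_ & _ & g & gm & gc & gh & hg).
  apply isoC_of_E_isoC, bijective_homA_iso.
  - apply E_mor_injective. intro q. exists (g q). apply hg.
  - apply (E_mor_surjective _ _ _ g gm gc gh).
Qed.

Lemma fmor_D_mor_eq (A B : vobj K) (f : homA A B) (x : pcar (fob (Do B))) (y : pcar (fob (Do A))) :
  (forall a, toH B x (f a) = toH A y a) -> fmor (Dm f) x = y.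
Proof.
  intro E. apply (castP_inj _ _ (D_flat_ob _ _ R A)), BHom_eq. intro a. rewrite D_flat_mor. apply E.
Qed.

Lemma D_mor_p_embedding (A B : vobj K) (f : homA A B) :
  (forall b, exists a, f a = b) -> p_embedding (fmor (Dm f)).
Proof.
  intros Hs x x'.
  rewrite <- (castP_ple _ _ (D_flat_ob _ _ R A)), <- (castP_ple _ _ (D_flat_ob _ _ R B)).
  simpl. setoid_rewrite D_flat_mor. split; [|auto].
  intros H b. destruct (Hs b) as [a <-]. apply H.
Qed.

Section FlatProduct.
Variables A1 A2 : vobj K.

Local Notation P := (prodV K A1 A2).
Local Notation e10 := (btop (flatA A1), bbot (flatA A2)).
Local Notation e01 := (bbot (flatA A1), btop (flatA A2)).

Lemma D_proj1_p_embedding : p_embedding (fmor (Dm (proj1V K A1 A2))).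
Proof. apply D_mor_p_embedding. intro a. exists (a, bbot (flatA A2)). reflexivity. Qed.

Lemma D_proj2_p_embedding : p_embedding (fmor (Dm (proj2V K A1 A2))).
Proof. apply D_mor_p_embedding. intro a. exists (bbot (flatA A1), a). reflexivity. Qed.

Lemma D_proj_values (a : pcar (fob (Do A1))) (b : pcar (fob (Do A2))) :
  toH P (fmor (Dm (proj1V K A1 A2)) a) e10 = true /\
  toH P (fmor (Dm (proj1V K A1 A2)) a) e01 = false /\
  toH P (fmor (Dm (proj2V K A1 A2)) b) e10 = false /\
  toH P (fmor (Dm (proj2V K A1 A2)) b) e01 = true.
Proof.
  rewrite !D_flat_mor. cbn [ahfun proj1V proj2V fst snd].
  destruct (bhom_top_bot _ (toH A1 a)) as [-> ->].
  destruct (bhom_top_bot _ (toH A2 b)) as [-> ->].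
  repeat split.
Qed.

Lemma D_proj_images_dunion :
  images_dunion (fmor (Dm (proj1V K A1 A2))) (fmor (Dm (proj2V K A1 A2))).
Proof.
  split; [|split].
  - intro y. set (h := toH P y).
    destruct (prod_bhom_factor _ _ (d_is_bdl K A1) (d_is_bdl K A2)
                (Build_BHom _ _ _ (bdl_hom_flat_prodV K A1 A2 _ (bhom h))))
      as [[x1 Hx1]|[x2 Hx2]].
    + left. destruct (castP_surj _ _ (D_flat_ob _ _ R A1) x1) as [x <-].
      exists x. apply fmor_D_mor_eq. intro a. symmetry; apply Hx1.
    + right. destruct (castP_surj _ _ (D_flat_ob _ _ R A2) x2) as [x <-].
      exists x. apply fmor_D_mor_eq. intro a. symmetry; apply Hx2.
  - intros a b E. destruct (D_proj_values a b) as (Ha & _ & Hb & _).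
    rewrite E, Hb in Ha. discriminate.
  - intros a b. destruct (D_proj_values a b) as (Ha1 & Ha2 & Hb1 & Hb2).
    rewrite <- !(castP_ple _ _ (D_flat_ob _ _ R P)). simpl. split; intro H.
    + rewrite (H _ Ha1) in Hb1. discriminate.
    + rewrite (H _ Hb2) in Ha2. discriminate.
Qed.

End FlatProduct.

Section CanonicalCoproduct.
Variables x1 x2 : cob X.

Local Notation P := (prodV K (Eo x1) (Eo x2)).

Definition coprod_ob : cob X := Do P.
Definition coprod_in1 : chom x1 coprod_ob := ccomp (Dm (proj1V K _ _)) (eps x1).
Definition coprod_in2 : chom x2 coprod_ob := ccomp (Dm (proj2V K _ _)) (eps x2).

Lemma ED_proj_jointly_mono :
  jointly_mono (C := alg_cat K) (Em (Dm (proj1V K (Eo x1) (Eo x2)))) (Em (Dm (proj2V K _ _))).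
Proof.
  apply (@jointly_mono_conj (alg_cat K) _ _ _ _ _ _ _ _ _ _ (eta P) (eta (Eo x1)) (eta (Eo x2))
           (projV_jointly_mono K _ _)); try apply unit_isoC; apply unit_nat.
Qed.

Lemma coprod_in_jointly_epi (z : cob X) (h h' : chom coprod_ob z) :
  ccomp h coprod_in1 = ccomp h' coprod_in1 -> ccomp h coprod_in2 = ccomp h' coprod_in2 -> h = h'.
Proof.
  unfold coprod_in1, coprod_in2. rewrite <- !ccomp_assoc. intros E1 E2.
  apply iso_epi in E1, E2; try apply counit_isoC.
  apply (f_equal Em) in E1, E2. rewrite !E_comp in E1, E2.
  apply E_faithful, (ED_proj_jointly_mono _ _ _ E1 E2).
Qed.

Lemma coprod_is_coproduct : is_coproduct coprod_in1 coprod_in2.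
Proof.
  intros z f1 f2. destruct (counit_iso _ _ R z) as [c [c1 _]].
  set (h := ccomp c (Dm (pairV K _ _ _ (Em f1) (Em f2)))).
  assert (Hin : forall x (i : homA P (Eo x)) (f : chom x z),
             acomp i (pairV K _ _ _ (Em f1) (Em f2)) = Em f ->
             ccomp h (ccomp (Dm i) (eps x)) = f).
  { intros x i f E. unfold h.
    rewrite !ccomp_assoc, <- (ccomp_assoc _ _ _ _ _ (Dm _)), <- D_comp, E, counit_nat,
      <- ccomp_assoc, c1, ccomp_id_l.
    reflexivity. }
  exists h. split; [|split].
  - apply Hin, proj1V_pairV.
  - apply Hin, proj2V_pairV.
  - intros h' e1 e2. apply coprod_in_jointly_epi; [rewrite e1|rewrite e2]; symmetry; apply Hin;
      [apply proj1V_pairV|apply proj2V_pairV].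
Qed.

Lemma coprod_flat_iso : pspace_iso (copair (fmor coprod_in1) (fmor coprod_in2)).
Proof.
  apply (pspace_iso_comp _ _ _ _ _ _
           (pspace_iso_dsum _ _ _ _ _ _ (fmor_pspace_iso _ _ _ _ (counit_isoC x1))
                                        (fmor_pspace_iso _ _ _ _ (counit_isoC x2)))
           (copair_pspace_iso _ _ _ _ _ (fmor_cont _ _ _ _) (fmor_cont _ _ _ _)
              (D_proj1_p_embedding _ _) (D_proj2_p_embedding _ _) (D_proj_images_dunion _ _))).
  intros [a|b]; apply fmor_comp.
Qed.

End CanonicalCoproduct.
Lemma coproduct_flat_iso (x1 x2 y : cob X) (i1 : chom x1 y) (i2 : chom x2 y) :
  is_coproduct i1 i2 -> pspace_iso (copair (fmor i1) (fmor i2)).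
Proof.
  intro Hc.
  destruct (coproduct_unique _ _ _ _ _ _ _ _ (coprod_is_coproduct x1 x2) Hc) as (t & Ht & E1 & E2).
  apply (pspace_iso_comp _ _ _ _ _ _ (coprod_flat_iso x1 x2) (fmor_pspace_iso _ _ _ _ Ht)).
  intros [a|b]; [rewrite <- E1|rewrite <- E2]; apply fmor_comp.
Qed.

Lemma coproduct_of_flat_dunion (x1 x2 y : cob X) (phi1 : chom x1 y) (phi2 : chom x2 y) :
  p_embedding (fmor phi1) -> p_embedding (fmor phi2) -> images_dunion (fmor phi1) (fmor phi2) ->
  is_coproduct phi1 phi2.
Proof.
  intros e1 e2 Himg.
  destruct (coprod_is_coproduct x1 x2 y phi1 phi2) as (h & <- & <- & _).
  apply coproduct_transfer; [apply coprod_is_coproduct|].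
  apply isoC_of_flat_iso.
  apply (pspace_iso_cancel_r _ _ _ _ _ _ (coprod_flat_iso x1 x2)
           (copair_pspace_iso _ _ _ _ _ (fmor_cont _ _ _ _) (fmor_cont _ _ _ _) e1 e2 Himg)).
  intros [a|b]; symmetry; apply fmor_comp.
Qed.

End Duality.

Theorem lemma2p10 (K : DVariety) (X : PCat) (R : RPD K X) :
  ((forall x1 x2 : cob X, exists (y : cob X) (i1 : @chom X x1 y) (i2 : @chom X x2 y),
       is_coproduct i1 i2) /\
   (forall (x1 x2 y : cob X) (i1 : @chom X x1 y) (i2 : @chom X x2 y),
       is_coproduct i1 i2 ->
       pspace_iso (X := dunion (fob x1) (fob x2)) (Y := fob y)
         (fun u => match u with inl a => fmor i1 a | inr b => fmor i2 b end)))
  /\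
  (forall (x1 x2 y : cob X) (phi1 : @chom X x1 y) (phi2 : @chom X x2 y),
      p_embedding (fmor phi1) -> p_embedding (fmor phi2) ->
      images_dunion (fmor phi1) (fmor phi2) ->
      is_coproduct phi1 phi2).
Proof.
  split; [split|].
  - intros x1 x2.
    exists (coprod_ob K X R x1 x2), (coprod_in1 K X R x1 x2), (coprod_in2 K X R x1 x2).
    apply coprod_is_coproduct.
  - exact (coproduct_flat_iso K X R).
  - exact (coproduct_of_flat_dunion K X R).
Qed.
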